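(* Let $w$ be a word and $TG(w) = (V, E_1, \dots, E_T)$ the temporal graph it represents, and suppose $TG(w)$ is connected in every timestep. Then for every edge $(v_x, v_y)$ of $G(w)$ and every $t \in [1, T - \min(d(v_x), d(v_y))]$, we have $(v_x, v_y) \in E_t \cup E_{t+1} \cup \dots \cup E_{t + \min(d(v_x), d(v_y))}$.
   Context: Words are over $\Sigma=\{1,\dots,n\}$; $w[i]$ is the $i$-th letter, $w[i,j]$ the factor $w[i]\cdots w[j]$, $\mathrm{letters}(u)$ the set of symbols occurring in $u$, $\pi_{\mathcal S}(w)$ the subsequence of $w$ of all occurrences of symbols in $\mathcal S$. Symbols $x,y$ alternate in $w$ if $\pi_{\{x,y\}}(w) \in \{(xy)^k, (xy)^kx, (yx)^k, (yx)^ky : k \ge 0\}$. $G(w)$ has vertex set $V=\{v_1,\dots,v_n\}$ and undirected edge $(v_x,v_y)$ iff $x\neq y$ alternate in $w$; $d(v)$ is the degree of $v$ in $G(w)$. Start points: $S_1=1$, and $S_i$ is the least index $j>S_{i-1}$ with $w[j] \in \mathrm{letters}(w[S_{i-1},j-1])$; $S_1<\dots<S_T$ are all start points. The $t$-th timestep factor is $w[S_t,S_{t+1}-1]$ ($t<T$) or $w[S_T,|w|]$ ($t=T$). $TG(w)=(V,E_1,\dots,E_T)$ with $E_t$ the set of edges $(v_x,v_y)$ of $G(w)$ with $x$ or $y$ occurring in the $t$-th timestep factor. Connected in every timestep means $(V,E_t)$ is connected for all $t$. *)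

(* Symbols 1..n of the paper are represented by 'I_n
   (symbol i+1 <-> ordinal i); positions are 0-indexed internally,
   timesteps are 1-indexed as in the paper. *)
From mathcomp Require Import all_boot.
Set Implicit Arguments. Unset Strict Implicit. Unset Printing Implicit Defensive.

Section Words.
Variable n : nat.
Notation word := (seq 'I_n).

Definition proj2 (x y : 'I_n) (w : word) : word :=
  [seq a <- w | (a == x) || (a == y)].

(* x and y alternate: pi_{x,y}(w) is (xy)^k, (xy)^k x, (yx)^k or (yx)^k y
   for some k >= 0 (k is necessarily <= |w|). *)
Definition alternate (w : word) (x y : 'I_n) : bool :=
  let p := proj2 x y w in
  [exists k : 'I_(size w).+1,
     [|| p == flatten (nseq k [:: x; y]),
         p == flatten (nseq k [:: x; y]) ++ [:: x],
         p == flatten (nseq k [:: y; x])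
       | p == flatten (nseq k [:: y; x]) ++ [:: y]]].

Definition edgeG (w : word) : rel 'I_n :=
  fun x y => (x != y) && alternate w x y.

Definition deg (w : word) (x : 'I_n) : nat := #|[set y | edgeG w x y]|.

Definition repeats (w : word) (s j : nat) : bool :=
  has (fun a => onth w j == Some a) (take (j - s) (drop s w)).

Definition next_start (w : word) (s : nat) : option nat :=
  if [seq j <- iota s.+1 (size w - s.+1) | repeats w s j] is j :: _
  then Some j else None.

Fixpoint starts_from (fuel : nat) (w : word) (s : nat) : seq nat :=
  if fuel is f.+1 then
    s :: (if next_start w s is Some j then starts_from f w j else [::])
  else [::].

(* the list S_1 < ... < S_T (0-indexed positions; S_1 = 0);
   size w + 1 steps of fuel suffice since start points strictly increase *)
Definition starts (w : word) : seq nat := starts_from (size w).+1 w 0.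

Definition nsteps (w : word) : nat := size (starts w).

Definition S (w : word) (t : nat) : nat := nth 0 (starts w) t.-1.

Definition factor (w : word) (t : nat) : word :=
  if t < nsteps w then take (S w t.+1 - S w t) (drop (S w t) w)
  else drop (S w t) w.

Definition Et (w : word) (t : nat) : rel 'I_n :=
  fun x y => edgeG w x y && ((x \in factor w t) || (y \in factor w t)).

Definition connected_step (w : word) (t : nat) : Prop :=
  forall u v : 'I_n, connect (Et w t) u v.

Definition connected_every_timestep (w : word) : Prop :=
  forall t, 1 <= t <= nsteps w -> connected_step w t.

End Words.

From mathcomp Require Import all_boot zify.
Set Implicit Arguments. Unset Strict Implicit. Unset Printing Implicit Defensive.

(* Let u be the endpoint of the edge with smaller degree d.  Every neighbour z
   of u alternates with u, so z occurs at most once in any factor of w in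
   which u does not occur.  Suppose u occurred in none of the timesteps
   t, ..., t + d.  Their factors concatenate to one factor of w avoiding u,
   and in each of them some neighbour of u occurs, since the first edge of a
   path in (V, E_t') leaving u must have its other endpoint in the t'-th
   factor.  This gives d + 1 occurrences of at most d neighbours, each
   occurring at most once: a contradiction. *)

Definition slice (T : Type) (s : seq T) (a b : nat) : seq T := take (b - a) (drop a s).

Lemma cat_slice (T : Type) (s : seq T) a b c : a <= b <= c ->
  slice s a b ++ slice s b c = slice s a c.
Proof.
case/andP=> ab bc; rewrite /slice -[in drop b s](subnK ab) -drop_drop -takeD.
by congr take; lia.
Qed.

Lemma flatten_slices (T : Type) (s : seq T) (f : nat -> nat) a k :
  {homo f : i j / i <= j} ->
  flatten [seq slice s (f i) (f i.+1) | i <- iota a k] = slice s (f a) (f (a + k)).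
Proof.
move=> f_homo; elim: k a => [|k IH] a /=; first by rewrite addn0 /slice subnn take0.
by rewrite IH addSnnS cat_slice // !f_homo //; lia.
Qed.

Lemma cat_take_slice_drop (T : Type) (s : seq T) a b : a <= b ->
  take a s ++ slice s a b ++ drop b s = s.
Proof.
move=> ab; rewrite /slice -[in drop b s](subnK ab) -drop_drop.
by rewrite cat_take_drop cat_take_drop.
Qed.

Lemma size_le_count_flatten (T : Type) (a : pred T) (ss : seq (seq T)) :
  all (has a) ss -> size ss <= count a (flatten ss).
Proof.
elim: ss => [|s ss IH] //= /andP[has_s /IH le_ss].
by rewrite count_cat -add1n leq_add // -has_count.
Qed.

Lemma count_mem_le1_uniq (T : eqType) (s : seq T) :
  (forall x, count_mem x s <= 1) -> uniq s.
Proof.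
move=> le1; apply: count_mem_uniq => x; move: (le1 x).
by rewrite -has_pred1 has_count; case: count => [|[]].
Qed.

Lemma count_le_card (T : finType) (A : {set T}) (s : seq T) :
  {in A, forall z, count_mem z s <= 1} -> count (mem A) s <= #|A|.
Proof.
move=> le1; rewrite -size_filter cardE; apply: uniq_leq_size => [|z]; last first.
  by rewrite mem_filter mem_enum => /andP[].
apply: count_mem_le1_uniq => z; rewrite count_filter.
have [zA|zNA] := boolP (z \in A).
  by apply: leq_trans (le1 z zA); apply: sub_count => a /andP[].
rewrite (eq_count (a2 := pred0)) ?count_pred0 // => a /=.
by apply/negbTE/andP => -[/eqP->]; apply/negP.
Qed.

Lemma path_alternating (T : eqType) (x y : T) k : x != y ->
  path [rel a b | a != b] y (flatten (nseq k [:: x; y]) ++ [:: x]).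
Proof. by move=> xy; elim: k => [|k IH] /=; rewrite eq_sym xy // xy. Qed.

Lemma sorted_alternating (T : eqType) (x y : T) k : x != y ->
  sorted [rel a b | a != b] (flatten (nseq k [:: x; y])) &&
  sorted [rel a b | a != b] (flatten (nseq k [:: x; y]) ++ [:: x]).
Proof.
move=> xy; case: k => [|k] //.
have alt := path_alternating k xy; move: (alt); rewrite cat_path => /andP[alt' _].
by rewrite /= xy alt' alt.
Qed.

Section Alternation.
Variable n : nat.
Implicit Types (w s : seq 'I_n) (x y : 'I_n).

Lemma alternate_sorted w x y : x != y -> alternate w x y ->
  sorted [rel a b | a != b] (proj2 x y w).
Proof.
move=> xy; have yx : y != x by rewrite eq_sym.
case/existsP=> k /or4P[]/eqP->.
- by case/andP: (sorted_alternating k xy).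
- by case/andP: (sorted_alternating k xy).
- by case/andP: (sorted_alternating k yx).
- by case/andP: (sorted_alternating k yx).
Qed.

Lemma count_mem_infix_le1 w p s q x y : x != y -> alternate w x y ->
  w = p ++ s ++ q -> x \notin s -> count_mem y s <= 1.
Proof.
move=> xy alt wE xNs; move: (alternate_sorted xy alt).
rewrite /proj2 wE !filter_cat => /cat_sorted2[_ /cat_sorted2[+ _]].
have -> : [seq a <- s | (a == x) || (a == y)] = [seq a <- s | a == y].
  apply: eq_in_filter => a a_s; suff /negbTE-> : a != x by [].
  by apply: contraNneq xNs => <-.
rewrite -size_filter; have := filter_all (pred1 y) s.
case: [seq a <- s | a == y] => [|a [|b r]] //= /and3P[/eqP-> /eqP-> _].
by rewrite eqxx.
Qed.

Lemma count_neighbors_infix w p s q u : w = p ++ s ++ q -> u \notin s ->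
  count (mem [set z | edgeG w u z]) s <= deg w u.
Proof.
move=> wE uNs; apply: count_le_card => z; rewrite inE => /andP[uz alt].
exact: count_mem_infix_le1 uz alt wE uNs.
Qed.
End Alternation.

Section Timesteps.
Variables (n : nat) (w : seq 'I_n).

Lemma next_start_bounds s j : next_start w s = Some j -> s < j < size w.
Proof.
rewrite /next_start.
case E: [seq j <- iota s.+1 (size w - s.+1) | repeats w s j] => [|j' r] //= [<-].
have : j' \in [seq j <- iota s.+1 (size w - s.+1) | repeats w s j] by rewrite E mem_head.
by rewrite mem_filter mem_iota => /andP[_ /andP[? ?]]; lia.
Qed.

Lemma sorted_starts_from f s : sorted ltn (starts_from f w s).
Proof.
elim: f s => [|f IH] s //=; case E: next_start => [j|] //=.
have /andP[sj _] := next_start_bounds E.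
by move: (IH j); case: f {IH} => [|f] //= ->; rewrite sj.
Qed.

Lemma starts_from_le_size f s : s <= size w ->
  all (leq^~ (size w)) (starts_from f w s).
Proof.
elim: f s => [|f IH] s s_le //=; rewrite s_le; case E: next_start => [j|] //=.
by apply: IH; have := next_start_bounds E; lia.
Qed.

(* For 1 <= t <= T, [cut t] is the start point S_t; the default of [nth]
   makes [cut T.+1 = size w], so the t-th factor always ends at [cut t.+1]. *)
Definition cut (t : nat) : nat := nth (size w) (starts w) t.-1.

Lemma cut_le_size t : cut t <= size w.
Proof.
rewrite /cut; have [t_lt|t_ge] := ltnP t.-1 (size (starts w)); last by rewrite nth_default.
exact: allP (starts_from_le_size _ (leq0n _)) _ (mem_nth _ t_lt).
Qed.

Lemma cut_homo : {homo cut : i j / i <= j}.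
Proof.
move=> i j ij; have [j_lt|j_ge] := ltnP j.-1 (size (starts w)); last first.
  by rewrite {2}/cut nth_default // cut_le_size.
apply: (sorted_leq_nth leq_trans leqnn) => //; last by lia.
- by apply: sub_sorted (sorted_starts_from _ _) => ? ?; apply: ltnW.
- by rewrite inE; lia.
Qed.

Lemma cutE t : 1 <= t <= nsteps w -> cut t = S w t.
Proof.
by move=> t_in; rewrite /cut /S (set_nth_default 0) //; rewrite /nsteps in t_in; lia.
Qed.

Lemma cut_last : cut (nsteps w).+1 = size w.
Proof. by rewrite /cut nth_default. Qed.

Lemma factorE t : 1 <= t <= nsteps w -> factor w t = slice w (cut t) (cut t.+1).
Proof.
move=> t_in; rewrite /factor /slice (cutE t_in); case: ltnP => [t_lt|t_ge].
  by rewrite cutE ?t_lt.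
have -> : t = nsteps w by lia.
by rewrite cut_last take_oversize // size_drop.
Qed.

Lemma factors_window t m : 1 <= t -> t + m <= nsteps w ->
  flatten [seq factor w t' | t' <- iota t m.+1] = slice w (cut t) (cut (t + m.+1)).
Proof.
move=> t_ge t_le; rewrite -flatten_slices; last exact: cut_homo.
by congr flatten; apply/eq_in_map => t'; rewrite mem_iota => t'_in; apply: factorE; lia.
Qed.

Lemma neighbor_in_factor t x y : connected_step w t -> x != y ->
  x \notin factor w t -> exists2 z, edgeG w x z & z \in factor w t.
Proof.
move=> conn xy xN; case/connectP: (conn x y) => -[|z p] /=.
  by move=> _ yx; rewrite yx eqxx in xy.
by case/andP=> /andP[xz]; rewrite (negbTE xN) => zf _ _; exists z.
Qed.

Lemma mem_factor_window u v t : connected_every_timestep w -> u != v ->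
  1 <= t -> t + deg w u <= nsteps w ->
  exists2 t', t <= t' <= t + deg w u & u \in factor w t'.
Proof.
move=> conn uv t_ge t_le; set m := deg w u; set N := [set z | edgeG w u z].
have [/hasP[t' + u_t']|/hasPn uN] := boolP (has (fun t' => u \in factor w t') (iota t m.+1)).
  by rewrite mem_iota => t'_in; exists t' => //; lia.
set seg := flatten [seq factor w t' | t' <- iota t m.+1].
have uNseg : u \notin seg.
  by apply/flattenP => -[_ /mapP[t' t'_in ->]]; apply/negP/uN.
have lower : m.+1 <= count (mem N) seg.
  rewrite -[m.+1](size_iota t) -(size_map (factor w)); apply: size_le_count_flatten.
  apply/allP => _ /mapP[t' t'_in ->]; move: (t'_in); rewrite mem_iota => t'_range.
  have [z uz zf] := neighbor_in_factor (conn t' ltac:(lia)) uv (uN t' t'_in).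
  by apply/hasP; exists z => //; rewrite /= inE.
have wE : w = take (cut t) w ++ seg ++ drop (cut (t + m.+1)) w.
  by rewrite /seg factors_window // cat_take_slice_drop // cut_homo // leq_addr.
by have := leq_trans lower (count_neighbors_infix wE uNseg); rewrite ltnn.
Qed.
End Timesteps.

Theorem corollary2 (n : nat) (w : seq 'I_n) :
  connected_every_timestep w ->
  forall x y : 'I_n, edgeG w x y ->
  forall t : nat, 1 <= t <= nsteps w - minn (deg w x) (deg w y) ->
  exists2 t' : nat, t <= t' <= t + minn (deg w x) (deg w y) & Et w t' x y.
Proof.
move=> conn x y xy t /andP[t_ge t_le]; have x_neq_y : x != y by case/andP: xy.
have [dx|dy] := leqP (deg w x) (deg w y).
- rewrite (minn_idPl dx) in t_le *.
  have [t' t'_in x_t'] := mem_factor_window conn x_neq_y t_ge ltac:(lia).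
  by exists t' => //; rewrite /Et xy x_t'.
- rewrite (minn_idPr (ltnW dy)) in t_le *; rewrite eq_sym in x_neq_y.
  have [t' t'_in y_t'] := mem_factor_window conn x_neq_y t_ge ltac:(lia).
  by exists t' => //; rewrite /Et xy y_t' orbT.
Qed.
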